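(* Let $m\ge1$ and work in $\Lambda^{\pm}_m=\mathbb Z[x_1^{\pm1},\dots,x_m^{\pm1}]^{S_m}$. (1) For every sequence of integers $\lambda=(\lambda_1,\dots,\lambda_m)$, $E_\lambda(x_1,\dots,x_m)=\det\big(H_{\lambda_i-i+j}\big)_{1\le i,j\le m}$. (2) For every sequence of integers $\lambda_1,\dots,\lambda_{m+1}$, $\det\big(H_{\lambda_i-i+j}\big)_{1\le i,j\le m+1}=0$ in $\Lambda^{\pm}_m$.
   Context: For a sequence of integers $\lambda=(\lambda_1,\dots,\lambda_m)$, $E_\lambda$ is defined by $E_\lambda(x)\prod_{i<j}(x_i-x_j)=\sum_{\sigma\in S_m}\mathrm{sgn}(\sigma)\sigma(x_1^{\lambda_1+m-1}x_2^{\lambda_2+m-2}\cdots x_m^{\lambda_m})$, and $H_k=E_{(k,0,\dots,0)}$ for $k\in\mathbb Z$. *)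

From HB Require Import structures.
From mathcomp Require Import all_boot all_order all_algebra all_fingroup.
From mathcomp Require Import fraction.
From mathcomp.multinomials Require Import mpoly.
Set Implicit Arguments. Unset Strict Implicit. Unset Printing Implicit Defensive.
Import Order.TTheory GRing.Theory Num.Theory.
Local Open Scope ring_scope.

(* The Laurent ring Z[x_1^{+-1},...,x_m^{+-1}] (and hence Lambda^{+-}_m) embeds
   injectively in the field of rational functions Q(x_1,...,x_m), realised as
   the fraction field of {mpoly int[m]}. *)
Definition RatFun (m : nat) := {fraction {mpoly int[m]}}.

Definition xv (m : nat) (i : 'I_m) : RatFun m :=
  @FracField.tofrac _ ('X_i : {mpoly int[m]}).

Definition alternant (m : nat) (a : 'I_m -> int) : RatFun m :=
  \sum_(s : 'S_m) (-1) ^+ s * \prod_(i : 'I_m) (xv (s i)) ^ (a i).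

Definition vandermonde (m : nat) : RatFun m :=
  \prod_(i : 'I_m) \prod_(j : 'I_m | (i < j)%N) (xv i - xv j).

(* E_lambda, the unique solution of E_lambda * vandermonde = alternant of
   (lambda_i + m - i) (1-based); 0-based exponent lambda_i + (m-1-i). *)
Definition E (m : nat) (lam : 'I_m -> int) : RatFun m :=
  alternant (fun i => lam i + ((m.-1 - i)%N)%:Z) / vandermonde m.

Definition H (m : nat) (k : int) : RatFun m :=
  E (fun i : 'I_m => if (i : nat) == 0%N then k else 0).

From HB Require Import structures.
From mathcomp Require Import all_boot all_order all_algebra all_fingroup.
From mathcomp Require Import fraction.
From mathcomp.multinomials Require Import mpoly.
From mathcomp Require Import zify.
Import Order.TTheory GRing.Theory Num.Theory.
Set Implicit Arguments. Unset Strict Implicit. Unset Printing Implicit Defensive.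
Local Open Scope ring_scope.

(* With P(a) := (x_l ^ a_i), the alternant defining H_k differs from the
   Vandermonde determinant det P(delta) only in its first row, so expanding
   along that row gives H_k = sum_l x_l ^ (k + m - 1) c_l with c_l independent
   of k. Hence the Jacobi-Trudi matrix (H_(lam_i - i + j)) factors as
   P(lam_i - i + m - 1) * (x_l ^ j c_l), through an m-dimensional space. For
   m + 1 rows this forces determinant 0. For m rows, the first factor has
   determinant the alternant of lam + delta, and the second one has
   determinant 1 / Vandermonde, as one sees at lam = 0, where the Jacobi-Trudi
   matrix is unitriangular (H_0 = 1 and H_(-k) = 0 for 0 < k < m). *)

Lemma det_mulmx_inner_lt (F : fieldType) (N r : nat)
    (A : 'M[F]_(N, r)) (B : 'M[F]_(r, N)) :
  (r < N)%N -> \det (A *m B) = 0.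
Proof.
move=> rN; apply/eqP; apply: contraTT (mulmx_max_rank A B).
rewrite -unitfE -unitmxE -row_free_unit => /eqP ->.
by rewrite -ltnNge.
Qed.

Section Alternants.

Variable m : nat.

Lemma xv_eq (i j : 'I_m) : (xv i == xv j) = (i == j).
Proof.
apply/idP/eqP => [|-> //]; rewrite /xv tofrac_eq => /eqP /(congr1 (mcoeff U_(i))).
by rewrite !mcoeffXU eqxx => /esym/eqP; rewrite pnatr_eq1 eqb1 => /eqP.
Qed.

Lemma xv_neq0 (i : 'I_m) : xv i != 0.
Proof.
rewrite /xv tofrac_eq0; apply/eqP => /(congr1 (mcoeff U_(i))).
by rewrite mcoeffXU eqxx mcoeff0 => /eqP; rewrite oner_eq0.
Qed.

Definition powmx N (a : 'I_N -> int) : 'M[RatFun m]_(N, m) :=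
  \matrix_(i, l) xv l ^ a i.

Lemma alternant_det (a : 'I_m -> int) : alternant a = \det (powmx a).
Proof.
by apply: eq_bigr => s _; congr (_ * _); apply: eq_bigr => i _; rewrite mxE.
Qed.

Definition staircase (i : 'I_m) : int := (m.-1 - i)%N.

Lemma vandermonde_det : vandermonde m = \det (powmx staircase).
Proof.
pose rev := perm (@rev_ord_inj m).
set B := Vandermonde m (\row_l (xv (rev_ord l) : RatFun m)).
have -> : powmx staircase = row_perm rev (col_perm rev B).
  apply/matrixP => i l; rewrite !mxE !permE rev_ordK /=.
  by congr (_ ^+ _); rewrite -add1n subnDA subn1.
rewrite row_permE col_permE !det_mulmx !det_perm odd_permV mulrC -mulrA.
rewrite -signr_addb addbb expr0 mulr1 det_Vandermonde /vandermonde !pair_big_dep.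
rewrite (reindex_inj (h := fun p : 'I_m * 'I_m => (rev_ord p.2, rev_ord p.1))).
  apply: eq_big => [[a b]|p _] /=; last by rewrite !mxE.
  by have := ltn_ord a; have := ltn_ord b; move=> ? ?; apply/idP/idP; lia.
by move=> [a b] [c d] /(congr1 (fun p => (rev_ord p.2, rev_ord p.1))) /=;
  rewrite !rev_ordK.
Qed.

Lemma vandermonde_neq0 : vandermonde m != 0.
Proof.
apply/prodf_neq0 => i _; apply/prodf_neq0 => j ij.
by rewrite subr_eq0 xv_eq neq_ltn ij.
Qed.

Lemma E_det (lam : 'I_m -> int) :
  E lam = \det (powmx (fun i => lam i + staircase i)) / vandermonde m.
Proof. by rewrite /E alternant_det. Qed.

Lemma H0 : H m 0 = 1.
Proof.
rewrite /H E_det (_ : powmx _ = powmx staircase) -?vandermonde_det.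
  by rewrite divff // vandermonde_neq0.
by apply/matrixP => i l; rewrite !mxE if_same add0r.
Qed.

End Alternants.

Definition jacobi_trudi_mx m N (lam : 'I_N -> int) : 'M[RatFun m]_N :=
  \matrix_(i < N, j < N) H m (lam i - (i : nat)%:Z + (j : nat)%:Z).

Section JacobiTrudi.

Variable n : nat.
Local Notation m := n.+1.

Lemma H_neg (k : nat) : (0 < k < m)%N -> H m (- k%:Z) = 0.
Proof.
move=> /andP [k_gt0 k_lt]; rewrite /H E_det.
rewrite (@determinant_alternate _ _ _ ord0 (Ordinal k_lt)) ?mul0r //.
  by rewrite -val_eqE /= eq_sym -lt0n.
move=> l; rewrite !mxE /staircase /= (negbTE (lt0n_neq0 k_gt0)).
by congr (_ ^ _); lia.
Qed.

Definition hcoef (l : 'I_m) : RatFun m :=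
  cofactor (powmx m (@staircase m)) ord0 l / vandermonde m.

Lemma H_expand (k : int) : H m k = \sum_l xv l ^ (k + n%:Z) * hcoef l.
Proof.
rewrite /H E_det (expand_det_row _ ord0) mulr_suml.
apply: eq_bigr => l _; rewrite /hcoef !mxE mulrA /staircase /= subn0.
rewrite /cofactor !mulrA; congr (_ * \det _ / _); apply/matrixP => i j.
by rewrite !mxE lift0.
Qed.

Definition hfactor N : 'M[RatFun m]_(m, N) :=
  \matrix_(l, j) (xv l ^ (j : nat)%:Z * hcoef l).

Lemma jacobi_trudi_mxE N (lam : 'I_N -> int) :
  jacobi_trudi_mx m lam
  = powmx m (fun i => lam i - (i : nat)%:Z + n%:Z) *m hfactor N.
Proof.
apply/matrixP => i j; rewrite !mxE H_expand; apply: eq_bigr => l _.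
rewrite /hfactor !mxE [RHS]mulrA -expfzDr ?xv_neq0 //.
by rewrite [lam i - _ + _ + _]addrAC.
Qed.

Lemma powmx_shiftE (lam : 'I_m -> int) :
  powmx m (fun i => lam i - (i : nat)%:Z + n%:Z)
  = powmx m (fun i => lam i + staircase i).
Proof.
apply/matrixP => i l; rewrite !mxE /staircase; congr (_ ^ _).
by have := ltn_ord i; lia.
Qed.

Lemma det_hfactor : \det (hfactor m) = (vandermonde m)^-1.
Proof.
have unitrig : \det (jacobi_trudi_mx m (fun _ : 'I_m => 0)) = 1.
  rewrite -det_tr det_trig.
    by rewrite big1 // => i _; rewrite !mxE subrK H0.
  apply/is_trig_mxP => i j ij; rewrite !mxE.
  have j_lt := ltn_ord j.
  by rewrite (_ : _ - _ + _ = - (j - i)%N%:Z) ?H_neg //; lia.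
rewrite jacobi_trudi_mxE det_mulmx powmx_shiftE in unitrig.
rewrite (_ : powmx _ _ = powmx m (@staircase m)) -?vandermonde_det in unitrig.
  apply: (mulfI (vandermonde_neq0 m)).
  by rewrite unitrig divff // vandermonde_neq0.
by apply/matrixP => i l; rewrite !mxE add0r.
Qed.

Lemma E_jacobi_trudi (lam : 'I_m -> int) : E lam = \det (jacobi_trudi_mx m lam).
Proof.
by rewrite jacobi_trudi_mxE det_mulmx det_hfactor powmx_shiftE E_det.
Qed.

Lemma det_jacobi_trudi_mx_oversize (lam : 'I_m.+1 -> int) :
  \det (jacobi_trudi_mx m lam) = 0.
Proof. by rewrite jacobi_trudi_mxE det_mulmx_inner_lt. Qed.

End JacobiTrudi.

Theorem mainTheorem3 (m : nat) (hm : (1 <= m)%N) :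
  (forall lam : 'I_m -> int,
     E lam = \det (\matrix_(i < m, j < m)
                     H m (lam i - ((i : nat))%:Z + ((j : nat))%:Z)))
  /\
  (forall lam : 'I_m.+1 -> int,
     \det (\matrix_(i < m.+1, j < m.+1)
             H m (lam i - ((i : nat))%:Z + ((j : nat))%:Z)) = 0).
Proof.
case: m hm => [//|n] _; split.
- exact: E_jacobi_trudi.
- exact: det_jacobi_trudi_mx_oversize.
Qed.
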